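(* Let $\delta,\alpha\geq0$, $\theta\in[0,\alpha]$, $\sigma\in\mathbb{R}$, $\varepsilon\in(0,1)$, and let $\widehat{v}(t,\xi)$ solve $(1+|\xi|^{2\delta})\widehat{v}_{tt}+|\xi|^{2\theta}\widehat{v}_t+|\xi|^{2\alpha}\widehat{v}=0$. Define, for $|\xi|\geq\varepsilon$, $$\rho(\xi)=\begin{cases}\dfrac{\varepsilon^{2\alpha+2\delta-4\theta}|\xi|^{2\theta}}{2(1+|\xi|^{2\delta})}&\text{if }\alpha+\delta\geq2\theta,\\[2mm] \dfrac{\varepsilon^{-2\alpha+4\theta}|\xi|^{2\alpha-2\theta}}{4}&\text{if }\alpha+\delta<2\theta,\end{cases}$$ $$E(t,\xi)=\tfrac12(1+|\xi|^{2\delta})|\xi|^\sigma|\widehat{v}_t|^2+\tfrac12|\xi|^{2\alpha+\sigma}|\widehat{v}|^2+\rho(\xi)(1+|\xi|^{2\delta})|\xi|^\sigma\,\mathrm{Re}\{\widehat{v}_t\overline{\widehat{v}}\}+\tfrac12\rho(\xi)|\xi|^{2\theta+\sigma}|\widehat{v}|^2,$$ $$E_1(t,\xi)=\tfrac12|\xi|^{2\delta+\sigma}|\widehat{v}_t|^2+\tfrac12|\xi|^{2\alpha+\sigma}|\widehat{v}|^2.$$ Then $E$ and $E_1$ are equivalent for all $t\geq0$ and $|\xi|\geq\varepsilon$: there are constants $m,M>0$ independent of $t,\xi$ with $mE_1(t,\xi)\leq E(t,\xi)\leq ME_1(t,\xi)$.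
   Context: $\widehat{v}$, $\widehat{v}_t$ are evaluated at $(t,\xi)$; the bar denotes complex conjugation. *)

From Stdlib Require Import Reals.
From Coquelicot Require Import Coquelicot.
Open Scope R_scope.

Fixpoint sumsq (n : nat) (xi : nat -> R) : R :=
  match n with O => 0 | S k => sumsq k xi + xi k ^ 2 end.
Definition enorm (n : nat) (xi : nat -> R) : R := sqrt (sumsq n xi).

(* real power r^a for r >= 0, with the convention 0^0 = 1 and 0^a = 0 for a <> 0 *)
Definition pw (r a : R) : R :=
  if Req_EM_T r 0 then (if Req_EM_T a 0 then 1 else 0) else Rpower r a.

Definition rho (alpha delta theta eps r : R) : R :=
  if Rle_dec (2 * theta) (alpha + delta)
  then pw eps (2*alpha + 2*delta - 4*theta) * pw r (2*theta) / (2 * (1 + pw r (2*delta)))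
  else pw eps (-2*alpha + 4*theta) * pw r (2*alpha - 2*theta) / 4.

(* E(t,xi) with r = |xi|, w = v_t, u = v *)
Definition energyE (alpha delta theta sigma eps r : R) (w u : C) : R :=
  / 2 * (1 + pw r (2*delta)) * pw r sigma * (Cmod w) ^ 2
  + / 2 * pw r (2*alpha + sigma) * (Cmod u) ^ 2
  + rho alpha delta theta eps r * (1 + pw r (2*delta)) * pw r sigma * Re (w * Cconj u)
  + / 2 * rho alpha delta theta eps r * pw r (2*theta + sigma) * (Cmod u) ^ 2.

Definition energyE1 (alpha delta sigma r : R) (w u : C) : R :=
  / 2 * pw r (2*delta + sigma) * (Cmod w) ^ 2
  + / 2 * pw r (2*alpha + sigma) * (Cmod u) ^ 2.

From Stdlib Require Import Reals Lra Psatz.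
From Coquelicot Require Import Coquelicot.
Open Scope R_scope.

(* The bounds hold pointwise in (w, u) = (v_t, v).
   With a = r^(2 delta), b = r^(2 alpha), c = r^(2 theta) and r = |xi|, E / r^sigma is
     (1 + a) |w|^2 / 2 + b |u|^2 / 2 + rho (1 + a) Re (w conj u) + rho c |u|^2 / 2,
   and for r >= eps the weight satisfies rho^2 (1 + a) <= b / 4 and rho c <= b.
   Young's inequality then absorbs the cross term, so E / r^sigma lies between
   ((1 + a) |w|^2 + b |u|^2) / 4 and (1 + a) |w|^2 + 9/8 b |u|^2, and E_1 is
   recovered from a <= 1 + a <= (1 + eps^(-2 delta)) a. *)

Lemma exp_le x y : x <= y -> exp x <= exp y.
Proof. intros [h | ->]; [left; apply exp_increasing |]; lra. Qed.

Lemma pw_Rpower x y : 0 < x -> pw x y = Rpower x y.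
Proof. intros hx; unfold pw; destruct (Req_EM_T x 0); [lra | easy]. Qed.

Lemma Re_mul_Cconj_le (w u : C) : Rabs (Re (w * Cconj u)) <= Cmod w * Cmod u.
Proof. rewrite <- (Cmod_conj u), <- Cmod_mult; apply re_le_Cmod. Qed.

Definition admissible_weight (a b c rho : R) : Prop :=
  0 <= rho /\ rho ^ 2 * (1 + a) <= b / 4 /\ rho * c <= b.

Section QuadraticForm.

Variables a b c rho : R.
Hypotheses (ha : 0 < a) (hc : 0 <= c) (hrho : admissible_weight a b c rho).
Variables W U X : R.
Hypothesis hX : Rabs X <= W * U.

Lemma form_lower :
  / 4 * (a * W ^ 2 + b * U ^ 2)
  <= / 2 * (1 + a) * W ^ 2 + / 2 * b * U ^ 2 + rho * (1 + a) * X + / 2 * rho * c * U ^ 2.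
Proof.
  destruct hrho as (hr0 & hr2 & _).
  assert (hX' : - (W * U) <= X) by (apply Rabs_le_between in hX; lra).
  assert (cross : 0 <= rho * (1 + a) * (X + W * U)) by (apply Rmult_le_pos; nra).
  assert (young : rho * (W * U) <= W ^ 2 / 4 + rho ^ 2 * U ^ 2)
    by (pose proof (pow2_ge_0 (W - 2 * rho * U)); nra).
  assert (absorb : (1 + a) * (rho * (W * U)) <= (1 + a) * (W ^ 2 / 4 + rho ^ 2 * U ^ 2)) by nra.
  assert (absorb_b : rho ^ 2 * (1 + a) * U ^ 2 <= b / 4 * U ^ 2) by nra.
  assert (c_term : 0 <= rho * c * U ^ 2) by (apply Rmult_le_pos; nra).
  nra.
Qed.

Lemma form_upper K :
  1 + a <= K * a -> 9 / 8 <= K ->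
  / 2 * (1 + a) * W ^ 2 + / 2 * b * U ^ 2 + rho * (1 + a) * X + / 2 * rho * c * U ^ 2
  <= K * (a * W ^ 2 + b * U ^ 2).
Proof.
  intros hK hK2.
  destruct hrho as (hr0 & hr2 & hrc).
  assert (hX' : X <= W * U) by (apply Rabs_le_between in hX; lra).
  assert (cross : 0 <= rho * (1 + a) * (W * U - X)) by (apply Rmult_le_pos; nra).
  assert (young : rho * (W * U) <= W ^ 2 / 2 + rho ^ 2 * U ^ 2 / 2)
    by (pose proof (pow2_ge_0 (W - rho * U)); nra).
  assert (absorb : (1 + a) * (rho * (W * U)) <= (1 + a) * (W ^ 2 / 2 + rho ^ 2 * U ^ 2 / 2)) by nra.
  assert (absorb_b : rho ^ 2 * (1 + a) * U ^ 2 <= b / 4 * U ^ 2) by nra.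
  assert (c_term : rho * c * U ^ 2 <= b * U ^ 2) by nra.
  assert (kinetic : (1 + a) * W ^ 2 <= K * a * W ^ 2) by nra.
  assert (potential : 0 <= b * U ^ 2) by nra.
  nra.
Qed.

End QuadraticForm.

(* Through Rpower x y = exp (y ln x), each inequality between products of powers
   of eps and r becomes a comparison of exponents, which follows from
   ln eps < 0 and ln eps <= ln r. *)
Section Weight.

Variables alpha delta theta eps r : R.
Hypotheses (hdelta : 0 <= delta) (heps : 0 < eps < 1) (hr : eps <= r).

Let a := Rpower r (2 * delta).
Let b := Rpower r (2 * alpha).
Let c := Rpower r (2 * theta).

Lemma ln_eps_neg : ln eps < 0.
Proof. rewrite <- ln_1; apply ln_increasing; lra. Qed.

Lemma ln_eps_le : ln eps <= ln r.
Proof. apply ln_le; lra. Qed.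

Lemma rho_admissible_le :
  2 * theta <= alpha + delta ->
  admissible_weight a b c
    (Rpower eps (2 * alpha + 2 * delta - 4 * theta) * c / (2 * (1 + a))).
Proof.
  intros hregime.
  pose proof ln_eps_neg; pose proof ln_eps_le.
  set (P := Rpower eps (2 * alpha + 2 * delta - 4 * theta)).
  assert (hPcc : P * c * c <= a * b).
  { unfold P, a, b, c, Rpower; rewrite <- !exp_plus; apply exp_le; nra. }
  assert (hP1 : P <= 1).
  { unfold P, Rpower; rewrite <- exp_0; apply exp_le; nra. }
  assert (ha : 0 < a) by apply exp_pos.
  assert (hb : 0 < b) by apply exp_pos.
  assert (hc : 0 < c) by apply exp_pos.
  assert (hP : 0 < P) by apply exp_pos.
  set (rho := P * c / (2 * (1 + a))).
  assert (hrho : rho * (2 * (1 + a)) = P * c) by (unfold rho; field; lra).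
  assert (0 <= rho) by (unfold rho; apply Rle_mult_inv_pos; nra).
  repeat split; auto.
  - apply Rmult_le_reg_r with (4 * (1 + a) ^ 2); [nra |].
    replace (rho ^ 2 * (1 + a) * (4 * (1 + a) ^ 2)) with ((P * c) ^ 2 * (1 + a))
      by (rewrite <- hrho; ring).
    assert (P * (P * c * c) <= a * b) by nra.
    nra.
  - apply Rmult_le_reg_r with (2 * (1 + a)); [nra |].
    replace (rho * c * (2 * (1 + a))) with (P * c * c) by (rewrite <- hrho; ring).
    nra.
Qed.

Lemma rho_admissible_gt :
  alpha + delta < 2 * theta ->
  admissible_weight a b c
    (Rpower eps (-2 * alpha + 4 * theta) * Rpower r (2 * alpha - 2 * theta) / 4).
Proof.
  intros hregime.
  pose proof ln_eps_neg; pose proof ln_eps_le.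
  set (Q := Rpower eps (-2 * alpha + 4 * theta)).
  set (d := Rpower r (2 * alpha - 2 * theta)).
  assert (hdc : d * c = b).
  { unfold d, c, b, Rpower; rewrite <- exp_plus; f_equal; ring. }
  assert (hQ1 : Q <= 1).
  { unfold Q, Rpower; rewrite <- exp_0; apply exp_le; nra. }
  assert (hQdd : Q * (d * d) <= b).
  { unfold Q, d, b, Rpower; rewrite <- !exp_plus; apply exp_le; nra. }
  assert (hQdda : Q * (d * d) * a <= b).
  { unfold Q, d, b, a, Rpower; rewrite <- !exp_plus; apply exp_le; nra. }
  assert (ha : 0 < a) by apply exp_pos.
  assert (hb : 0 < b) by apply exp_pos.
  assert (hd : 0 < d) by apply exp_pos.
  assert (hQ : 0 < Q) by apply exp_pos.
  repeat split.
  - nra.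
  - replace ((Q * d / 4) ^ 2 * (1 + a)) with (Q * (Q * (d * d) + Q * (d * d) * a) / 16)
      by field.
    assert (0 <= Q * (d * d)) by (apply Rmult_le_pos; nra).
    assert (Q * (Q * (d * d) + Q * (d * d) * a) <= 1 * (b + b))
      by (apply Rmult_le_compat; nra).
    lra.
  - replace (Q * d / 4 * c) with (Q * b / 4) by (rewrite <- hdc; field). nra.
Qed.

Lemma rho_admissible : admissible_weight a b c (rho alpha delta theta eps r).
Proof.
  unfold rho; rewrite !pw_Rpower by lra.
  destruct Rle_dec; [apply rho_admissible_le | apply rho_admissible_gt]; lra.
Qed.

Lemma one_le_Rpower_eps : 1 <= Rpower eps (-2 * delta).
Proof.
  pose proof ln_eps_neg.
  unfold Rpower; rewrite <- exp_0; apply exp_le; nra.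
Qed.

Lemma one_add_Rpower_le : 1 + a <= (1 + Rpower eps (-2 * delta)) * a.
Proof.
  pose proof ln_eps_neg; pose proof ln_eps_le.
  assert (1 <= Rpower eps (-2 * delta) * a).
  { unfold a, Rpower; rewrite <- exp_plus, <- exp_0; apply exp_le; nra. }
  lra.
Qed.

End Weight.

Lemma energy_equiv_pointwise alpha delta theta sigma eps r (w u : C) :
  0 <= delta -> 0 < eps < 1 -> eps <= r ->
  / 2 * energyE1 alpha delta sigma r w u <= energyE alpha delta theta sigma eps r w u
  /\ energyE alpha delta theta sigma eps r w u
     <= 2 * (1 + Rpower eps (-2 * delta)) * energyE1 alpha delta sigma r w u.
Proof.
  intros hdelta heps hr.
  set (a := Rpower r (2 * delta)); set (b := Rpower r (2 * alpha)).
  set (c := Rpower r (2 * theta)); set (s := Rpower r sigma).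
  set (rh := rho alpha delta theta eps r).
  set (X := Re (w * Cconj u)).
  set (F := / 2 * (1 + a) * Cmod w ^ 2 + / 2 * b * Cmod u ^ 2 + rh * (1 + a) * X
            + / 2 * rh * c * Cmod u ^ 2).
  assert (hE : energyE alpha delta theta sigma eps r w u = s * F).
  { unfold energyE, F; rewrite !pw_Rpower, !Rpower_plus by lra; fold rh a b c s X; ring. }
  assert (hE1 : energyE1 alpha delta sigma r w u = s * (/ 2 * (a * Cmod w ^ 2 + b * Cmod u ^ 2))).
  { unfold energyE1; rewrite !pw_Rpower, !Rpower_plus by lra; fold a b s; ring. }
  assert (hs : 0 < s) by apply exp_pos.
  assert (ha : 0 < a) by apply exp_pos.
  assert (hc : 0 <= c) by (left; apply exp_pos).
  pose proof (rho_admissible alpha delta theta eps r hdelta heps hr) as hrh.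
  pose proof (Re_mul_Cconj_le w u) as hX.
  pose proof (form_lower a b c rh ha hc hrh _ _ X hX).
  pose proof (form_upper a b c rh ha hrh _ _ X hX _ (one_add_Rpower_le delta eps r hdelta heps hr)).
  pose proof (one_le_Rpower_eps delta eps hdelta heps).
  rewrite hE, hE1; unfold F; split.
  - replace (/ 2 * (s * (/ 2 * (a * Cmod w ^ 2 + b * Cmod u ^ 2))))
      with (s * (/ 4 * (a * Cmod w ^ 2 + b * Cmod u ^ 2))) by field.
    apply Rmult_le_compat_l; lra.
  - replace (2 * (1 + Rpower eps (-2 * delta)) * (s * (/ 2 * (a * Cmod w ^ 2 + b * Cmod u ^ 2))))
      with (s * ((1 + Rpower eps (-2 * delta)) * (a * Cmod w ^ 2 + b * Cmod u ^ 2))) by field.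
    apply Rmult_le_compat_l; lra.
Qed.

Theorem lemma3p2 (n : nat) (delta alpha theta sigma eps : R)
  (hdelta : 0 <= delta) (halpha : 0 <= alpha)
  (htheta : 0 <= theta <= alpha) (heps : 0 < eps < 1)
  (v v1 v2 : (nat -> R) -> R -> C)
  (hv : forall xi t, is_derive (v xi) t (v1 xi t))
  (hv1 : forall xi t, is_derive (v1 xi) t (v2 xi t))
  (hode : forall xi (t : R),
     (RtoC (1 + pw (enorm n xi) (2*delta)) * v2 xi t
     + RtoC (pw (enorm n xi) (2*theta)) * v1 xi t
     + RtoC (pw (enorm n xi) (2*alpha)) * v xi t)%C = RtoC 0) :
  exists m M : R, 0 < m /\ 0 < M /\
    forall (t : R) (xi : nat -> R), 0 <= t -> eps <= enorm n xi ->
      m * energyE1 alpha delta sigma (enorm n xi) (v1 xi t) (v xi t)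
        <= energyE alpha delta theta sigma eps (enorm n xi) (v1 xi t) (v xi t)
      /\ energyE alpha delta theta sigma eps (enorm n xi) (v1 xi t) (v xi t)
        <= M * energyE1 alpha delta sigma (enorm n xi) (v1 xi t) (v xi t).
Proof.
  exists (/ 2), (2 * (1 + Rpower eps (-2 * delta))).
  pose proof (one_le_Rpower_eps delta eps hdelta heps).
  split; [lra | split; [lra |]].
  intros t xi _ hr.
  exact (energy_equiv_pointwise alpha delta theta sigma eps _ _ _ hdelta heps hr).
Qed.
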